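(* Let $a_1\le a_2\le a_3\le a_4\le a_5$ be positive real numbers. Let $\sigma_0=(a_1,a_5,a_2,a_3,a_4)$ and $\sigma_1=(a_1,a_4,a_3,a_2,a_5)$. Then $\phi(\sigma_1)=\phi(\sigma_0)$, and for every tuple $(x_1,x_2,x_3,x_4,x_5)$ with $x_1=a_1$ and $(x_2,x_3,x_4,x_5)$ a permutation of $(a_2,a_3,a_4,a_5)$, we have $\phi(\sigma_0)\le\phi(x_1,x_2,x_3,x_4,x_5)$.
   Context: For real numbers $x_1,\dots,x_5$, define $\phi(x_1,x_2,x_3,x_4,x_5)=x_1x_2x_3+x_2x_3x_4+x_3x_4x_5+x_4x_5x_1+x_5x_1x_2$. *)

From Stdlib Require Import Reals List Permutation.
Open Scope R_scope.

Definition phi (x1 x2 x3 x4 x5 : R) : R :=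
  x1*x2*x3 + x2*x3*x4 + x3*x4*x5 + x4*x5*x1 + x5*x1*x2.

(* Fix x1 = a1 and write a2 = a1 + p, a3 = a2 + q, a4 = a3 + r, a5 = a4 + s
   with a1, p, q, r, s >= 0.  For each of the 24 arrangements of a2..a5, the
   difference phi(x) - phi(sigma0) expands to a polynomial in a1, p, q, r, s
   with nonnegative coefficients, hence is nonnegative. *)

From Stdlib Require Import Reals List Permutation Lra.
Open Scope R_scope.

Lemma Permutation_cons_split {A : Type} (x : A) (r l : list A) :
  Permutation (x :: r) l ->
  exists l1 l2, l = l1 ++ x :: l2 /\ Permutation r (l1 ++ l2).
Proof.
  intro Hperm.
  destruct (Permutation_vs_cons_inv (Permutation_sym Hperm)) as [l1 [l2 ->]].
  exists l1, l2; split; [reflexivity |].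
  exact (Permutation_cons_app_inv _ _ Hperm).
Qed.

(* Peels off the head of the left list and tries every position for it on the
   right; impossible positions are discarded by list length. *)
Ltac permutation_cases H :=
  lazymatch type of H with
  | Permutation nil _ => idtac
  | Permutation (_ :: _) _ =>
    let l1 := fresh "l" in let l2 := fresh "l" in
    let E := fresh "E" in let H' := fresh "H" in
    destruct (Permutation_cons_split _ _ _ H) as [l1 [l2 [E H']]]; clear H;
    destruct l1 as [|? [|? [|? [|? [|? ?]]]]]; simpl in E; try discriminate E;
    injection E; intros; subst; simpl in H'; permutation_cases H'
  end.

Ltac nonneg_polynomial :=
  repeat first [ assumption | apply Rplus_le_le_0_compat | apply Rmult_le_pos
               | apply pow_le | lra ].

Lemma le_exists_nonneg_add {x y : R} : x <= y -> exists d, 0 <= d /\ y = x + d.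
Proof. intro Hxy; exists (y - x); split; [lra | ring]. Qed.

Lemma phi_sigma1_sigma0 (a1 a2 a3 a4 a5 : R) :
  phi a1 a4 a3 a2 a5 = phi a1 a5 a2 a3 a4.
Proof. unfold phi; ring. Qed.

Lemma phi_sigma0_le_permutation (a1 a2 a3 a4 a5 x2 x3 x4 x5 : R) :
  0 <= a1 -> a1 <= a2 -> a2 <= a3 -> a3 <= a4 -> a4 <= a5 ->
  Permutation (x2 :: x3 :: x4 :: x5 :: nil) (a2 :: a3 :: a4 :: a5 :: nil) ->
  phi a1 a5 a2 a3 a4 <= phi a1 x2 x3 x4 x5.
Proof.
  intros ha h12 h23 h34 h45 Hperm.
  destruct (le_exists_nonneg_add h12) as [p [hp ->]].
  destruct (le_exists_nonneg_add h23) as [q [hq ->]].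
  destruct (le_exists_nonneg_add h34) as [r [hr ->]].
  destruct (le_exists_nonneg_add h45) as [s [hs ->]].
  clear h12 h23 h34 h45.
  permutation_cases Hperm; unfold phi;
  match goal with |- ?lhs <= ?rhs => cut (0 <= rhs - lhs); [lra |] end;
  ring_simplify; nonneg_polynomial.
Qed.

Theorem lemma1 (a1 a2 a3 a4 a5 : R) :
  0 < a1 -> a1 <= a2 -> a2 <= a3 -> a3 <= a4 -> a4 <= a5 ->
  phi a1 a4 a3 a2 a5 = phi a1 a5 a2 a3 a4 /\
  (forall x2 x3 x4 x5 : R,
     Permutation (x2 :: x3 :: x4 :: x5 :: nil) (a2 :: a3 :: a4 :: a5 :: nil) ->
     phi a1 a5 a2 a3 a4 <= phi a1 x2 x3 x4 x5).
Proof.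
  intros ha h12 h23 h34 h45; split.
  - apply phi_sigma1_sigma0.
  - intros x2 x3 x4 x5.
    apply phi_sigma0_le_permutation; [apply Rlt_le | ..]; assumption.
Qed.
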